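(* A $T_1$-space $X$ has a regular base at non-isolated points if and only if $X$ is a Hausdorff paracompact space with a development at non-isolated points.
   Context: $I(X)$ is the set of isolated points of $X$, $\mathrm{st}(A,\mathcal{W})=\bigcup\{W\in\mathcal{W}:W\cap A\neq\emptyset\}$. A base $\mathcal{B}$ is regular at $x$ if for every neighborhood $U$ of $x$ there is an open $V$ with $x\in V\subset U$ such that $\{B\in\mathcal{B}: B\cap V\neq\emptyset,\ B\not\subset U\}$ is finite; it is a regular base at non-isolated points if it is regular at every $x\in X\setminus I(X)$. A sequence $\{\mathcal{W}_i\}_{i\in\mathbb{N}}$ of open covers of $X$ is a development at non-isolated points if for every $x\in X\setminus I(X)$ and every open neighborhood $U$ of $x$ there are an open neighborhood $V$ of $x$ and $i\in\mathbb{N}$ with $\mathrm{st}(V,\mathcal{W}_i)\subset U$. *)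

From Stdlib Require Import List Classical.

Set Implicit Arguments.

Definition set (X : Type) := X -> Prop.
Definition family (X : Type) := set X -> Prop.

Definition subset {X : Type} (A B : set X) : Prop := forall x, A x -> B x.
Definition meets {X : Type} (A B : set X) : Prop := exists x, A x /\ B x.
Definition set_eq {X : Type} (A B : set X) : Prop := forall x, A x <-> B x.

Definition finite_family {X : Type} (F : family X) : Prop :=
  exists l : list (set X), forall A, F A -> exists B, In B l /\ set_eq A B.

Record is_topology {X : Type} (op : family X) : Prop := {
  top_full : op (fun _ => True);
  top_inter : forall U V, op U -> op V -> op (fun x => U x /\ V x);
  top_union : forall F : family X, (forall U, F U -> op U) ->
                op (fun x => exists U, F U /\ U x)
}.

Section Topo.
Variables (X : Type) (op : family X).

Definition neighborhood (U : set X) (x : X) : Prop :=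
  exists V, op V /\ V x /\ subset V U.

Definition isolated (x : X) : Prop := op (fun y => y = x).

Definition T1 : Prop :=
  forall x y : X, x <> y -> exists U, op U /\ U x /\ ~ U y.

Definition Hausdorff : Prop :=
  forall x y : X, x <> y ->
    exists U V, op U /\ op V /\ U x /\ V y /\ ~ meets U V.

Definition open_cover (W : family X) : Prop :=
  (forall U, W U -> op U) /\ (forall x, exists U, W U /\ U x).

Definition refines (V U : family X) : Prop :=
  forall A, V A -> exists B, U B /\ subset A B.

Definition locally_finite (F : family X) : Prop :=
  forall x, exists U, neighborhood U x /\ finite_family (fun A => F A /\ meets A U).

Definition paracompact : Prop :=
  forall U : family X, open_cover U ->
    exists V : family X, open_cover V /\ refines V U /\ locally_finite V.

Definition is_base (B : family X) : Prop :=
  (forall A, B A -> op A) /\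
  (forall U x, op U -> U x -> exists A, B A /\ A x /\ subset A U).

Definition regular_at (B : family X) (x : X) : Prop :=
  forall U, neighborhood U x ->
    exists V, op V /\ V x /\ subset V U /\
      finite_family (fun A => B A /\ meets A V /\ ~ subset A U).

Definition regular_base_nonisolated (B : family X) : Prop :=
  is_base B /\ forall x, ~ isolated x -> regular_at B x.

Definition star (A : set X) (W : family X) : set X :=
  fun y => exists C, W C /\ meets C A /\ C y.

Definition development_nonisolated (W : nat -> family X) : Prop :=
  (forall i, open_cover (W i)) /\
  forall x, ~ isolated x -> forall U, op U -> U x ->
    exists V i, op V /\ V x /\ subset (star V (W i)) U.

End Topo.

From Stdlib Require Import List Classical FunctionalExtensionality PropExtensionality
  IndefiniteDescription Wf_nat Lia Arith.

(* Regularity at a non-isolated z ∈ A ∈ B,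
   applied to the neighbourhood A itself, shows that only finitely many members
   of B contain A; hence strictly increasing chains in B above A are bounded.
   - Hausdorff: regularity at x for X∖{y} leaves finitely many members through y
     meeting some V ∋ x; a member through y avoiding one point of V in each of
     them misses V.
   - Development: the n-th cover consists of the members through a non-isolated
     point with a strict chain of length n above them, plus isolated singletons;
     bounded chain lengths make the stars st(V, W_n) shrink.
   - Paracompactness: the maximal members of B lying inside a given open cover
     are locally finite at non-isolated points, and a general lemma turns such a
     family into a locally finite open refinement.  Locally finite open refinements P_n of W_0 ∧ ... ∧ W_n, together
   with the isolated singletons, form a base regular at non-isolated points. *)

Section FiniteFamilies.
Context {X : Type}.
Implicit Types (F G : family X) (A S : set X).

Lemma set_ext {A S : set X} : set_eq A S -> A = S.
Proof.
  intro H. apply functional_extensionality. intro x.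
  apply propositional_extensionality. apply H.
Qed.

Lemma finite_family_sub F G :
  finite_family F -> (forall A, G A -> F A) -> finite_family G.
Proof. intros [l Hl] H. exists l. intros A GA. apply Hl, H, GA. Qed.

Lemma finite_family_extend F G S :
  finite_family F -> (forall A, G A -> set_eq A S \/ F A) -> finite_family G.
Proof.
  intros [l Hl] H. exists (S :: l). intros A GA.
  destruct (H A GA) as [E|FA].
  - exists S. split; [left; reflexivity| exact E].
  - destruct (Hl A FA) as [b [Hb Eb]]. exists b. split; [right; exact Hb| exact Eb].
Qed.

Lemma finite_family_image F G (f : set X -> set X) :
  finite_family F -> (forall A, G A -> exists M, F M /\ A = f M) -> finite_family G.
Proof.
  intros [l Hl] H. exists (map f l). intros A GA.
  destruct (H A GA) as [M [FM ->]]. destruct (Hl M FM) as [b [Hb Eb]].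
  exists (f b). split; [apply in_map, Hb|].
  rewrite (set_ext Eb). intro x. reflexivity.
Qed.

Lemma finite_family_bounded_union (F : nat -> family X) (n : nat) :
  (forall m, m < n -> finite_family (F m)) ->
  finite_family (fun A => exists m, m < n /\ F m A).
Proof.
  induction n as [|n IH]; intros H.
  - exists nil. intros A [m [Hm _]]. lia.
  - destruct IH as [l Hl]; [intros m Hm; apply H; lia|].
    destruct (H n (Nat.lt_succ_diag_r n)) as [l' Hl'].
    exists (l ++ l'). intros A [m [Hm FA]].
    destruct (Nat.eq_dec m n) as [->|NE].
    + destruct (Hl' A FA) as [b [Hb Eb]].
      exists b. split; [apply in_or_app; right; exact Hb| exact Eb].
    + destruct (Hl A) as [b [Hb Eb]]; [exists m; split; [lia| exact FA]|].
      exists b. split; [apply in_or_app; left; exact Hb| exact Eb].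
Qed.

Lemma finite_family_transversal F (y : X) :
  finite_family F -> (forall A, F A -> exists z, A z /\ z <> y) ->
  exists pts : list X, ~ In y pts /\ forall A, F A -> exists z, In z pts /\ A z.
Proof.
  intros [l Hl] Hpt.
  assert (Hlist : exists pts : list X, ~ In y pts /\
            forall b, In b l -> (exists z, b z /\ z <> y) -> exists z, In z pts /\ b z).
  { clear Hl Hpt. induction l as [|b t [pts [Hy Hpts]]].
    - exists nil. split; [intros []| intros b []].
    - destruct (classic (exists z, b z /\ z <> y)) as [[z [bz zy]]|Hno].
      + exists (z :: pts). split; [intros [E|H]; [exact (zy E)| exact (Hy H)]|].
        intros b' [<-|Hb'] Hex; [exists z; split; [left; reflexivity| exact bz]|].
        destruct (Hpts b' Hb' Hex) as [w [Hw bw]].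
        exists w. split; [right; exact Hw| exact bw].
      + exists pts. split; [exact Hy|].
        intros b' [<-|Hb'] Hex; [contradiction| exact (Hpts b' Hb' Hex)]. }
  destruct Hlist as [pts [Hy Hpts]]. exists pts. split; [exact Hy|].
  intros A FA. destruct (Hl A FA) as [b [Hb Eb]].
  destruct (Hpts b Hb) as [z [Hz bz]].
  - destruct (Hpt A FA) as [z [Az zy]]. exists z. split; [apply Eb, Az| exact zy].
  - exists z. split; [exact Hz| apply Eb, bz].
Qed.

Lemma list_remove {T : Type} (l : list T) (b0 : T) : In b0 l ->
  exists l', length l' < length l /\ forall b, In b l -> b <> b0 -> In b l'.
Proof.
  induction l as [|a t IH]; simpl; intros Hin; [contradiction|].
  destruct (classic (a = b0)) as [<-|NE].
  - exists t. split; [lia|]. intros b [<-|Hb] Hne; [contradiction| exact Hb].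
  - destruct Hin as [<-|Hin]; [contradiction|].
    destruct (IH Hin) as [t' [Hlen Ht']]. exists (a :: t'). simpl. split; [lia|].
    intros b [<-|Hb] Hne; [left; reflexivity| right; apply Ht'; assumption].
Qed.

Lemma finite_family_maximal F A0 : finite_family F -> F A0 ->
  exists M, F M /\ subset A0 M /\ forall S, F S -> subset M S -> subset S M.
Proof.
  intros [l Hl]. revert F A0 Hl.
  induction l as [l IH] using (well_founded_induction (well_founded_ltof _ (@length (set X)))).
  intros F A0 Hl HA0.
  destruct (classic (forall S, F S -> subset A0 S -> subset S A0)) as [Hmax|Hnot].
  { exists A0. split; [exact HA0|]. split; [intros x h; exact h| exact Hmax]. }
  (* otherwise climb to a strictly larger member S1; A0 drops out of the list *)
  apply not_all_ex_not in Hnot as [S1 Hnot].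
  apply imply_to_and in Hnot as [FS1 Hnot]. apply imply_to_and in Hnot as [A0S1 S1A0].
  destruct (Hl A0 HA0) as [b0 [Hb0 Eb0]].
  destruct (list_remove l b0 Hb0) as [l' [Hlen Hl']].
  destruct (IH l' Hlen (fun S => F S /\ subset S1 S) S1) as [M [[FM S1M] [_ HM]]].
  - intros S [FS S1S]. destruct (Hl S FS) as [b [Hb Eb]].
    exists b. split; [|exact Eb]. apply Hl'; [exact Hb|]. intros ->.
    apply S1A0. intros x h. apply Eb0, Eb, S1S, h.
  - split; [exact FS1| intros x h; exact h].
  - exists M. split; [exact FM|]. split; [intros x h; apply S1M, A0S1, h|].
    intros S FS MS. apply HM; [split; [exact FS| intros x h; apply MS, S1M, h]| exact MS].
Qed.

End FiniteFamilies.

Lemma list_uniform_bound {T : Type} (P : nat -> T -> Prop) (l : list T) :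
  (forall n m b, n <= m -> P n b -> P m b) ->
  (forall b, In b l -> exists N, P N b) -> exists N, forall b, In b l -> P N b.
Proof.
  intros Hmono. induction l as [|a t IH]; intros H.
  - exists 0. intros b [].
  - destruct IH as [N1 HN1]; [intros b Hb; apply H; right; exact Hb|].
    destruct (H a (or_introl eq_refl)) as [N2 HN2].
    exists (N1 + N2). intros b [<-|Hb].
    + apply (Hmono N2); [lia| exact HN2].
    + apply (Hmono N1); [lia| apply HN1, Hb].
Qed.

Section Chains.
Context {X : Type} (B : family X).

Fixpoint chain_above (n : nat) (A : set X) : Prop :=
  match n with
  | 0 => True
  | S n => exists A', B A' /\ subset A A' /\ ~ subset A' A /\ chain_above n A'
  end.

Lemma chain_above_le n m A : n <= m -> chain_above m A -> chain_above n A.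
Proof.
  revert m A. induction n as [|n IH]; intros m A Hle Hm; [exact I|].
  destruct m as [|m]; [lia|].
  destruct Hm as [A' [BA' [AA' [A'A Hm]]]].
  exists A'. split; [exact BA'|]. split; [exact AA'|]. split; [exact A'A|].
  apply (IH m); [lia| exact Hm].
Qed.

(* A chain above A consists of distinct members of B containing A, so its
   length is bounded by the number of such members. *)
Lemma chain_above_bound m A (l : list (set X)) : B A ->
  (forall S, B S -> subset A S -> exists b, In b l /\ set_eq S b) ->
  length l <= m -> ~ chain_above m A.
Proof.
  revert A l. induction m as [|m IH]; intros A l BA Hl Hlen Hchain.
  - destruct l; [|simpl in Hlen; lia].
    destruct (Hl A BA (fun x h => h)) as [b [[] _]].
  - destruct Hchain as [A' [BA' [AA' [A'A Hchain]]]].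
    destruct (Hl A BA (fun x h => h)) as [b0 [Hb0 Eb0]].
    destruct (list_remove l b0 Hb0) as [l' [Hlen' Hl']].
    apply (IH A' l'); [exact BA'| | lia| exact Hchain].
    intros S BS A'S. destruct (Hl S BS (fun x h => A'S x (AA' x h))) as [b [Hb Eb]].
    exists b. split; [|exact Eb]. apply Hl'; [exact Hb|]. intros ->.
    apply A'A. intros x h. apply Eb0, Eb, A'S, h.
Qed.

Lemma chain_above_eventually_fails A : B A ->
  finite_family (fun S => B S /\ subset A S) -> exists N, ~ chain_above N A.
Proof.
  intros BA [l Hl]. exists (length l).
  apply (chain_above_bound _ A l BA); [|lia].
  intros S BS AS. apply Hl. split; assumption.
Qed.

End Chains.

Definition singleton {X : Type} (y : X) : set X := fun z => z = y.

Section SpaceFacts.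
Context {X : Type} {op : family X}.

Lemma nonisolated_other_point x A : ~ isolated op x -> op A -> A x ->
  exists y, A y /\ y <> x.
Proof.
  intros Hx oA Ax. apply NNPP. intro Hno. apply Hx. unfold isolated.
  replace (fun y => y = x) with A; [exact oA|].
  apply set_ext. intro z. split; [|intros ->; exact Ax].
  intro Az. apply NNPP. intro zx. apply Hno. exists z. split; assumption.
Qed.

Lemma star_member_subset V U (W : family X) C A :
  subset (star V W) U -> W C -> subset A C -> meets A V -> subset A U.
Proof.
  intros Hst WC AC [v [Av Vv]] y Ay. apply Hst.
  exists C. split; [exact WC|]. split; [exists v; split; [apply AC, Av| exact Vv]| apply AC, Ay].
Qed.

Lemma subset_star V (W : family X) :
  (forall x, exists C, W C /\ C x) -> subset V (star V W).
Proof.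
  intros Hcov y Vy. destruct (Hcov y) as [C [WC Cy]].
  exists C. split; [exact WC|]. split; [exists y; split; assumption| exact Cy].
Qed.

Hypotheses (Htop : is_topology op) (HT1 : T1 op).

Lemma T1_point_complement_open y : op (fun z => z <> y).
Proof.
  replace (fun z => z <> y) with (fun z => exists U, (op U /\ ~ U y) /\ U z).
  - apply (top_union Htop). intros U [oU _]; exact oU.
  - apply set_ext. intro z. split.
    + intros [U [[_ Uy] Uz]] ->. contradiction.
    + intro zy. destruct (HT1 z y zy) as [U [oU [Uz Uy]]]. exists U. tauto.
Qed.

Lemma T1_finite_complement_open (pts : list X) : op (fun z => ~ In z pts).
Proof.
  induction pts as [|p t IH].
  - replace (fun z : X => ~ In z nil) with (fun _ : X => True); [apply (top_full Htop)|].
    apply set_ext. intro z. simpl. tauto.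
  - replace (fun z => ~ In z (p :: t)) with (fun z => z <> p /\ ~ In z t).
    + apply (top_inter Htop (fun z => z <> p)); [apply T1_point_complement_open| exact IH].
    + apply set_ext. intro z. simpl. split.
      * intros [zp zt] [<-|H]; [exact (zp eq_refl)| exact (zt H)].
      * intro H. split; [intros ->; apply H; left; reflexivity| intro zt; apply H; right; exact zt].
Qed.

End SpaceFacts.

Section RegularBase.
Context {X : Type} {op : family X} {B : family X}.
Hypotheses (Htop : is_topology op) (HT1 : T1 op) (HB : regular_base_nonisolated op B).

(* Regularity at z applied to a member A ∋ z: every member containing A
   meets any V ∋ z, so all but A itself belong to the finite exceptional family. *)
Lemma regular_supersets_finite z A : ~ isolated op z -> B A -> A z ->
  finite_family (fun S => B S /\ subset A S).
Proof.
  destruct HB as [[Bopen _] Breg]. intros Hz BA Az.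
  destruct (Breg z Hz A) as [V [_ [Vz [_ Hfin]]]].
  { exists A. split; [exact (Bopen A BA)| split; [exact Az| intros y h; exact h]]. }
  apply (finite_family_extend _ _ A Hfin). intros S [BS AS].
  destruct (classic (subset S A)) as [SA|SA].
  - left. intro y. split; [apply SA| apply AS].
  - right. split; [exact BS|]. split; [exists z; split; [apply AS, Az| exact Vz]| exact SA].
Qed.

(* Hausdorff: for x non-isolated, regularity at x for X∖{y} yields V ∋ x met by
   finitely many members through y; a member through y avoiding chosen points
   of V in each of them cannot meet V. *)
Lemma regular_base_hausdorff : Hausdorff op.
Proof.
  destruct HB as [[Bopen Blocal] Breg]. intros x y xy.
  destruct (classic (isolated op x)) as [Hx|Hx].
  { exists (singleton x), (fun z => z <> x).
    split; [exact Hx|]. split; [apply (T1_point_complement_open Htop HT1)|].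
    split; [reflexivity|]. split; [intros ->; exact (xy eq_refl)|].
    intros [w [-> ww]]. exact (ww eq_refl). }
  destruct (Breg x Hx (fun z => z <> y)) as [V [oV [Vx [Vy Hfin]]]].
  { exists (fun z => z <> y).
    split; [apply (T1_point_complement_open Htop HT1)| split; [exact xy| intros w h; exact h]]. }
  destruct (finite_family_transversal _ y Hfin) as [pts [ypts Hpts]].
  { intros A [_ [[w [Aw Vw]] _]]. exists w. split; [exact Aw| exact (Vy w Vw)]. }
  destruct (Blocal _ y (T1_finite_complement_open Htop HT1 pts) ypts) as [A [BA [Ay Apts]]].
  exists V, A. split; [exact oV|]. split; [exact (Bopen A BA)|].
  split; [exact Vx|]. split; [exact Ay|].
  intros [w [Vw Aw]]. destruct (Hpts A) as [z [Hz Az]].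
  - split; [exact BA|]. split; [exists w; split; assumption|].
    intro AU. exact (AU y Ay eq_refl).
  - exact (Apts z Az Hz).
Qed.

Definition deep (n : nat) (A : set X) : Prop :=
  B A /\ (exists z, ~ isolated op z /\ A z) /\ chain_above B n A.

Definition depth_cover (n : nat) : family X :=
  fun A => deep n A \/ exists y, isolated op y /\ A = singleton y.

Lemma base_strict_shrink x A : ~ isolated op x -> B A -> A x ->
  exists A', B A' /\ A' x /\ subset A' A /\ ~ subset A A'.
Proof.
  destruct HB as [[Bopen Blocal] _]. intros Hx BA Ax.
  destruct (nonisolated_other_point x A Hx (Bopen A BA) Ax) as [y [Ay yx]].
  destruct (Blocal (fun z => A z /\ z <> y) x) as [A' [BA' [A'x A'sub]]].
  - apply (top_inter Htop); [exact (Bopen A BA)| apply (T1_point_complement_open Htop HT1)].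
  - split; [exact Ax| intros ->; exact (yx eq_refl)].
  - exists A'. split; [exact BA'|]. split; [exact A'x|].
    split; [intros z h; apply (A'sub z h)|].
    intro AA'. exact (proj2 (A'sub y (AA' y Ay)) eq_refl).
Qed.

Lemma deep_local n x U : ~ isolated op x -> op U -> U x ->
  exists A, deep n A /\ A x /\ subset A U.
Proof.
  destruct HB as [[_ Blocal] _]. intros Hx oU Ux. induction n as [|n IH].
  - destruct (Blocal U x oU Ux) as [A [BA [Ax AU]]].
    exists A. split; [split; [exact BA| split; [exists x; split; assumption| exact I]]|].
    split; assumption.
  - destruct IH as [A [[BA [_ Hchain]] [Ax AU]]].
    destruct (base_strict_shrink x A Hx BA Ax) as [A' [BA' [A'x [A'A AA']]]].
    exists A'. split; [|split; [exact A'x| intros z h; apply AU, A'A, h]].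
    split; [exact BA'|]. split; [exists x; split; assumption|].
    exists A. split; [exact BA|]. split; [exact A'A|]. split; [exact AA'| exact Hchain].
Qed.

Lemma deep_eventually_fails A : exists N, ~ deep N A.
Proof.
  destruct (classic (exists z, ~ isolated op z /\ A z /\ B A)) as [[z [Hz [Az BA]]]|Hno].
  - destruct (chain_above_eventually_fails B A BA (regular_supersets_finite z A Hz BA Az))
      as [N HN].
    exists N. intros [_ [_ Hchain]]. exact (HN Hchain).
  - exists 0. intros [BA [[z [Hz Az]] _]]. apply Hno. exists z. tauto.
Qed.

(* Development: regularity at x leaves finitely many members meeting V and
   escaping U; all of them fail to be deep beyond some N, so st(V, depth_cover N) ⊂ U. *)
Lemma regular_base_development :
  development_nonisolated op (fun n => depth_cover n).
Proof.
  destruct HB as [[Bopen _] Breg]. split.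
  - intro n. split.
    + intros A [[BA _]|[y [Hy ->]]]; [exact (Bopen A BA)| exact Hy].
    + intro x. destruct (classic (isolated op x)) as [Hx|Hx].
      * exists (singleton x). split; [right; exists x; split; [exact Hx| reflexivity]| reflexivity].
      * destruct (deep_local n x _ Hx (top_full Htop) I) as [A [HA [Ax _]]].
        exists A. split; [left; exact HA| exact Ax].
  - intros x Hx U oU Ux.
    destruct (Breg x Hx U) as [V [oV [Vx [VU [l Hl]]]]].
    { exists U. split; [exact oU| split; [exact Ux| intros y h; exact h]]. }
    destruct (list_uniform_bound (fun N b => ~ deep N b) l) as [N HN].
    { intros n m b nm Hn Hm. apply Hn. destruct Hm as [BA [Hz Hchain]].
      split; [exact BA| split; [exact Hz| exact (chain_above_le B n m b nm Hchain)]]. }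
    { intros b _. apply deep_eventually_fails. }
    exists V, N. split; [exact oV|]. split; [exact Vx|].
    intros y [C [[HC|[w [_ ->]]] [[v [Cv Vv]] Cy]]].
    + apply NNPP. intro Uy.
      destruct (Hl C) as [b [Hb Eb]].
      { split; [exact (proj1 HC)|]. split; [exists v; split; assumption|].
        intro CU. exact (Uy (CU y Cy)). }
      apply (HN b Hb). rewrite <- (set_ext Eb). exact HC.
    + unfold singleton in Cv, Cy. subst. exact (VU _ Vv).
Qed.

End RegularBase.

Section RefinementAtNonisolated.
Context {X : Type} {op : family X}.
Hypothesis Htop : is_topology op.

Variables (Cov M : family X).
Hypotheses (HCov : open_cover op Cov)
  (HM : forall A, M A -> op A /\ exists U, Cov U /\ subset A U)
  (HMloc : forall x, ~ isolated op x -> exists V, op V /\ V x /\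
             (exists A, M A /\ subset V A) /\ finite_family (fun A => M A /\ meets A V)).

Definition tame (V : set X) : Prop :=
  op V /\ (exists A, M A /\ subset V A) /\ finite_family (fun A => M A /\ meets A V).

Definition tame_region : set X := fun z => exists V, tame V /\ V z.

Lemma tame_region_open : op tame_region.
Proof. apply (top_union Htop). intros V [oV _]. exact oV. Qed.

Lemma outside_tame_region_isolated y : ~ tame_region y -> isolated op y.
Proof.
  intro Hy. apply NNPP. intro Hiso.
  destruct (HMloc y Hiso) as [V [oV [Vy [HVM Hfin]]]].
  apply Hy. exists V. split; [split; [exact oV| split; assumption]| exact Vy].
Qed.

Definition tame_refinement : family X :=
  fun S => (exists A, M A /\ S = (fun w => A w /\ tame_region w)) \/
           (exists y, ~ tame_region y /\ S = singleton y).

Lemma tame_refinement_open_cover : open_cover op tame_refinement.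
Proof.
  split.
  - intros S [[A [MA ->]]|[y [Hy ->]]].
    + apply (top_inter Htop); [exact (proj1 (HM A MA))| exact tame_region_open].
    + exact (outside_tame_region_isolated y Hy).
  - intro x. destruct (classic (tame_region x)) as [Ox|Ox].
    + destruct Ox as [V [[oV [[A [MA VA]] Hfin]] Vx]].
      exists (fun w => A w /\ tame_region w). split; [left; exists A; split; [exact MA| reflexivity]|].
      split; [exact (VA x Vx)| exists V; split; [split; [exact oV| split; [exists A; split; assumption| exact Hfin]]| exact Vx]].
    + exists (singleton x). split; [right; exists x; split; [exact Ox| reflexivity]| reflexivity].
Qed.

Lemma tame_refinement_refines : refines tame_refinement Cov.
Proof.
  intros S [[A [MA ->]]|[y [_ ->]]].
  - destruct (proj2 (HM A MA)) as [U [CU AU]].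
    exists U. split; [exact CU| intros w [Aw _]; exact (AU w Aw)].
  - destruct (proj2 HCov y) as [U [CU Uy]].
    exists U. split; [exact CU| intros w ->; exact Uy].
Qed.

(* A tame V meets only traces of the finitely many members of M meeting V,
   and no singleton outside the region; outside, {x} is an open neighbourhood
   meeting nothing but itself. *)
Lemma tame_refinement_locally_finite : locally_finite op tame_refinement.
Proof.
  intro x. destruct (classic (tame_region x)) as [Ox|Ox].
  - destruct Ox as [V [HV Vx]]. pose proof HV as [oV [_ Hfin]].
    exists V. split; [exists V; split; [exact oV| split; [exact Vx| intros w h; exact h]]|].
    apply (finite_family_image _ _ (fun A w => A w /\ tame_region w) Hfin).
    intros S [[[A [MA ->]]|[y [Hy ->]]] Hmeet].
    + exists A. split; [|reflexivity]. split; [exact MA|].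
      destruct Hmeet as [w [[Aw _] Vw]]. exists w. split; assumption.
    + exfalso. destruct Hmeet as [w [-> Vw]]. apply Hy. exists V. split; assumption.
  - exists (singleton x).
    split; [exists (singleton x); split; [exact (outside_tame_region_isolated x Ox)|]; split; [reflexivity| intros w h; exact h]|].
    apply (finite_family_extend (fun _ => False) _ (singleton x)); [exists nil; intros A []|].
    intros S [[[A [_ ->]]|[y [_ ->]]] [w [Sw ->]]].
    + exfalso. exact (Ox (proj2 Sw)).
    + left. rewrite Sw. intro; reflexivity.
Qed.

End RefinementAtNonisolated.

Section RegularBaseParacompact.
Context {X : Type} {op : family X} {B : family X}.
Hypotheses (Htop : is_topology op) (HB : regular_base_nonisolated op B).
Variable Cov : family X.

Definition small_member (A : set X) : Prop :=
  B A /\ (exists z, ~ isolated op z /\ A z) /\ exists U, Cov U /\ subset A U.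

Definition maximal_small (A : set X) : Prop :=
  small_member A /\ forall S, small_member S -> subset A S -> subset S A.

Lemma maximal_small_covers x : open_cover op Cov -> ~ isolated op x ->
  exists A, maximal_small A /\ A x.
Proof.
  destruct HB as [[Bopen Blocal] _]. intros [CovOpen CovCovers] Hx.
  destruct (CovCovers x) as [U [CU Ux]].
  destruct (Blocal U x (CovOpen U CU) Ux) as [A [BA [Ax AU]]].
  destruct (finite_family_maximal (fun S => small_member S /\ subset A S) A)
    as [M [[SM AM] [_ HMmax]]].
  - apply (finite_family_sub _ _ (regular_supersets_finite HB x A Hx BA Ax)).
    intros S [[BS _] AS]. split; assumption.
  - split; [|intros y h; exact h]. split; [exact BA|].
    split; [exists x; split; assumption| exists U; split; assumption].
  - exists M. split; [|exact (AM x Ax)]. split; [exact SM|].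
    intros S SS MS. apply HMmax; [split; [exact SS| intros y h; exact (MS y (AM y h))]| exact MS].
Qed.

(* Regularity at x for a maximal member M0 ∋ x: a maximal member meeting the
   resulting V is either M0 itself or belongs to the finite exceptional family. *)
Lemma maximal_small_locally_finite x : open_cover op Cov -> ~ isolated op x ->
  exists V, op V /\ V x /\ (exists A, maximal_small A /\ subset V A) /\
    finite_family (fun A => maximal_small A /\ meets A V).
Proof.
  destruct HB as [[Bopen _] Breg]. intros HCov Hx.
  destruct (maximal_small_covers x HCov Hx) as [M0 [HM0 M0x]].
  destruct (Breg x Hx M0) as [V [oV [Vx [VM0 Hfin]]]].
  { exists M0. split; [exact (Bopen M0 (proj1 (proj1 HM0)))| split; [exact M0x| intros y h; exact h]]. }
  exists V. split; [exact oV|]. split; [exact Vx|]. split; [exists M0; split; assumption|].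
  apply (finite_family_extend _ _ M0 Hfin). intros A [HA Hmeet].
  destruct (classic (subset A M0)) as [AM0|AM0].
  - left. intro y. split; [apply AM0| apply (proj2 HA M0 (proj1 HM0) AM0)].
  - right. split; [exact (proj1 (proj1 HA))| split; assumption].
Qed.

Lemma regular_base_paracompact_cover : open_cover op Cov ->
  exists R, open_cover op R /\ refines R Cov /\ locally_finite op R.
Proof.
  destruct HB as [[Bopen _] _]. intro HCov.
  exists (tame_refinement (op := op) maximal_small).
  assert (HM : forall A, maximal_small A -> op A /\ exists U, Cov U /\ subset A U).
  { intros A [[BA [_ HU]] _]. split; [exact (Bopen A BA)| exact HU]. }
  pose proof (fun x => maximal_small_locally_finite x HCov) as Hloc.
  split; [exact (tame_refinement_open_cover Htop Cov maximal_small HM Hloc)|].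
  split; [exact (tame_refinement_refines Cov maximal_small HCov HM)|].
  exact (tame_refinement_locally_finite maximal_small Hloc).
Qed.

End RegularBaseParacompact.

Lemma regular_base_paracompact {X : Type} {op : family X} {B : family X} :
  is_topology op -> regular_base_nonisolated op B -> paracompact op.
Proof.
  intros Htop HB Cov HCov. exact (regular_base_paracompact_cover Htop HB Cov HCov).
Qed.

Fixpoint common_refinement {X : Type} (W : nat -> family X) (n : nat) : family X :=
  match n with
  | 0 => W 0
  | S n => fun T => exists A C, common_refinement W n A /\ W (S n) C /\
                      T = (fun z => A z /\ C z)
  end.

Lemma refines_trans {X : Type} (F G H : family X) :
  refines F G -> refines G H -> refines F H.
Proof.
  intros FG GH A FA. destruct (FG A FA) as [A' [GA' AA']].
  destruct (GH A' GA') as [A'' [HA'' A'A'']].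
  exists A''. split; [exact HA''| intros x h; exact (A'A'' x (AA' x h))].
Qed.

Lemma common_refinement_refines {X : Type} (W : nat -> family X) n i :
  i <= n -> refines (common_refinement W n) (W i).
Proof.
  revert i. induction n as [|n IH]; simpl; intros i Hi S HS.
  - assert (i = 0) as -> by lia. exists S. split; [exact HS| intros x h; exact h].
  - destruct HS as [A [C [HA [HC ->]]]].
    destruct (Nat.eq_dec i (S n)) as [->|NE].
    + exists C. split; [exact HC| intros x [_ h]; exact h].
    + destruct (IH i ltac:(lia) A HA) as [C' [HC' AC']].
      exists C'. split; [exact HC'| intros x [h _]; exact (AC' x h)].
Qed.

Section LocallyFiniteSequences.
Context {X : Type} {op : family X}.
Hypothesis Htop : is_topology op.

Lemma common_refinement_open_cover (W : nat -> family X) :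
  (forall i, open_cover op (W i)) -> forall n, open_cover op (common_refinement W n).
Proof.
  intros HW n. induction n as [|n [IHopen IHcover]]; simpl; [apply HW|]. split.
  - intros S [A [C [HA [HC ->]]]].
    apply (top_inter Htop); [exact (IHopen A HA)| exact (proj1 (HW (S n)) C HC)].
  - intro x. destruct (IHcover x) as [A [HA Ax]]. destruct (proj2 (HW (S n)) x) as [C [HC Cx]].
    exists (fun z => A z /\ C z). split; [exists A, C; tauto| split; assumption].
Qed.

Lemma locally_finite_common_neighborhood (F : nat -> family X) n x :
  (forall m, m < n -> locally_finite op (F m)) ->
  exists V, op V /\ V x /\ forall m, m < n -> finite_family (fun A => F m A /\ meets A V).
Proof.
  induction n as [|n IH]; intros HF.
  - exists (fun _ => True). split; [exact (top_full Htop)|]. split; [exact I| intros m Hm; lia].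
  - destruct IH as [V [oV [Vx HV]]]; [intros m Hm; apply HF; lia|].
    destruct (HF n (Nat.lt_succ_diag_r n) x) as [N [[N0 [oN0 [N0x N0N]]] HN]].
    exists (fun z => V z /\ N0 z). split; [exact (top_inter Htop V N0 oV oN0)|].
    split; [split; assumption|]. intros m Hm.
    destruct (Nat.eq_dec m n) as [->|NE].
    + apply (finite_family_sub _ _ HN). intros A [FA [y [Ay [_ N0y]]]].
      split; [exact FA| exists y; split; [exact Ay| exact (N0N y N0y)]].
    + apply (finite_family_sub _ _ (HV m ltac:(lia))). intros A [FA [y [Ay [Vy _]]]].
      split; [exact FA| exists y; split; assumption].
Qed.

Variables (W P : nat -> family X).
Hypotheses (HW : development_nonisolated op W)
  (HP : forall n, open_cover op (P n) /\ locally_finite op (P n))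
  (HPW : forall m i, i <= m -> refines (P m) (W i)).

Definition sequence_base : family X :=
  fun A => (exists y, isolated op y /\ A = singleton y) \/ exists n, P n A.

Lemma sequence_base_is_base : is_base op sequence_base.
Proof.
  split.
  - intros A [[y [Hy ->]]|[n Hn]]; [exact Hy| exact (proj1 (proj1 (HP n)) A Hn)].
  - intros U x oU Ux. destruct (classic (isolated op x)) as [Hx|Hx].
    + exists (singleton x). split; [left; exists x; split; [exact Hx| reflexivity]|].
      split; [reflexivity| intros z ->; exact Ux].
    + destruct (proj2 HW x Hx U oU Ux) as [V [i [oV [Vx Hst]]]].
      destruct (proj2 (proj1 (HP i)) x) as [A [HA Ax]].
      destruct (HPW i i (le_n i) A HA) as [C [HC AC]].
      exists A. split; [right; exists i; exact HA|]. split; [exact Ax|].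
      apply (star_member_subset V U (W i) C A Hst HC AC). exists x. split; assumption.
Qed.

(* At a non-isolated x with st(V, W_i) ⊂ U: members of P_m, m >= i, meeting V
   lie in U, and only finitely many members of P_0, ..., P_(i-1) meet a smaller V'. *)
Lemma sequence_base_regular x : ~ isolated op x -> regular_at op sequence_base x.
Proof.
  intros Hx U [U0 [oU0 [U0x U0U]]].
  destruct (proj2 HW x Hx U0 oU0 U0x) as [V [i [oV [Vx Hst]]]].
  assert (VU0 : subset V U0).
  { intros y Vy. apply Hst, (subset_star V (W i) (proj2 (proj1 HW i))), Vy. }
  destruct (locally_finite_common_neighborhood P i x (fun m _ => proj2 (HP m)))
    as [V1 [oV1 [V1x HV1]]].
  exists (fun z => V z /\ V1 z). split; [exact (top_inter Htop V V1 oV oV1)|].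
  split; [split; assumption|]. split; [intros y [Vy _]; exact (U0U y (VU0 y Vy))|].
  assert (Hfin : forall m, m < i ->
            finite_family (fun A => P m A /\ meets A (fun z => V z /\ V1 z))).
  { intros m Hm. apply (finite_family_sub _ _ (HV1 m Hm)).
    intros A [PA [y [Ay [_ V1y]]]]. split; [exact PA| exists y; split; assumption]. }
  apply (finite_family_sub _ _ (finite_family_bounded_union _ i Hfin)).
  intros A [[[y [_ ->]]|[m Pm]] [Hmeet AU]].
  - exfalso. destruct Hmeet as [w [<- [Vw _]]]. apply AU. intros z ->. exact (U0U w (VU0 w Vw)).
  - exists m. split; [|split; assumption].
    destruct (le_lt_dec i m) as [Him|Hmi]; [exfalso|exact Hmi].
    destruct (HPW m i Him A Pm) as [C [HC AC]].
    apply AU. intros z Az. apply U0U.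
    destruct Hmeet as [w [Aw [Vw _]]].
    apply (star_member_subset V U0 (W i) C A Hst HC AC); [exists w; split; assumption| exact Az].
Qed.

End LocallyFiniteSequences.

Lemma development_regular_base {X : Type} {op : family X} (W : nat -> family X) :
  is_topology op -> paracompact op -> development_nonisolated op W ->
  exists B, regular_base_nonisolated op B.
Proof.
  intros Htop Hpc HW.
  destruct (functional_choice (fun n P => open_cover op P /\
              refines P (common_refinement W n) /\ locally_finite op P)) as [P HP].
  { intro n. apply Hpc, (common_refinement_open_cover Htop W (proj1 HW)). }
  assert (HPW : forall m i, i <= m -> refines (P m) (W i)).
  { intros m i Him. apply (refines_trans _ (common_refinement W m));
      [exact (proj1 (proj2 (HP m)))| exact (common_refinement_refines W m i Him)]. }
  assert (HPlf : forall n, open_cover op (P n) /\ locally_finite op (P n)).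
  { intro n. split; [exact (proj1 (HP n))| exact (proj2 (proj2 (HP n)))]. }
  exists (sequence_base (op := op) P). split.
  - exact (sequence_base_is_base W P HW HPlf HPW).
  - exact (sequence_base_regular Htop W P HW HPlf HPW).
Qed.

Theorem mainTheorem6 (X : Type) (op : family X) (Htop : is_topology op)
  (HT1 : T1 op) :
  (exists B : family X, regular_base_nonisolated op B) <->
  (Hausdorff op /\ paracompact op /\
   exists W : nat -> family X, development_nonisolated op W).
Proof.
  split.
  - intros [B HB]. split; [exact (regular_base_hausdorff Htop HT1 HB)|].
    split; [exact (regular_base_paracompact Htop HB)|].
    exists (fun n => depth_cover (op := op) (B := B) n).
    exact (regular_base_development Htop HT1 HB).
  - intros [_ [Hpc [W HW]]]. exact (development_regular_base W Htop Hpc HW).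
Qed.
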